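(* Consider the following market for a sin good subject to a per-unit tax $t>0$. There are $N$ firms $k=1,\dots,N$ producing at common constant marginal cost $m$ and competing à la Bertrand–Nash. Each firm $k$ simultaneously chooses a salient posted price $p^s_k$ and a shrouded tax surcharge $\tau_k\in\{0,t\}$ (it ''shrouds'' if $\tau_k=t$); its effective consumer price is $p_k=p^s_k+\tau_k$ and its producer price is $p_k-t$. A fraction $\lambda$ of consumers, with $0<\lambda<1$, are attentive: they observe all effective prices and all shrouding decisions, and buying from a shrouding firm entails a fixed disutility $s\ge 0$. The remaining fraction $1-\lambda$ are inattentive: they observe posted prices but perceive the surcharge of a shrouding firm as $\theta t$ with $\theta<1$; demand of inattentive consumers is split equally among the firms with the lowest posted price. Firms cannot price-discriminate between consumer types. If $N\ge 4$, there exists an asymmetric pure-strategy equilibrium with two market segments: (i) at least two firms shroud taxes, choosing $p^s_k=m$ and $\tau_k=t$, and serve all inattentive consumers; and (ii) at least two firms do not shroud taxes, choosing $p^s_k=m+t$ and $\tau_k=0$, and serve all attentive consumers.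
   Context: Consumers otherwise behave as cost-minimizing buyers of a homogeneous good given their (perceived) prices. *)

From HB Require Import structures.
From mathcomp Require Import all_boot all_order all_algebra.
Set Implicit Arguments. Unset Strict Implicit. Unset Printing Implicit Defensive.
Import Order.TTheory GRing.Theory Num.Theory.
Local Open Scope ring_scope.

(* A firm's strategy: (salient posted price p^s, shrouding flag).
   shrouding = true means tau = t, false means tau = 0. *)
Section Market.
Variable R : realFieldType.
Variable N : nat.
Notation strat := (R * bool)%type.
Notation profile := ('I_N -> strat).

Definition surcharge (t : R) (x : strat) : R := if x.2 then t else 0.
Definition eff_price (t : R) (x : strat) : R := x.1 + surcharge t x.
Definition att_cost (t s : R) (x : strat) : R :=
  eff_price t x + (if x.2 then s else 0).

Definition inatt_set (sigma : profile) : {set 'I_N} :=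
  [set k | [forall j, (sigma k).1 <= (sigma j).1]].
Definition inatt_share (sigma : profile) (k : 'I_N) : R :=
  if k \in inatt_set sigma then (#|inatt_set sigma|%:R)^-1 else 0.

(* attentive consumers: cost-minimizing; among cost-minimizing firms they
   (weakly) prefer non-shrouding ones; split equally among the preferred. *)
Definition att_min (t s : R) (sigma : profile) : {set 'I_N} :=
  [set k | [forall j, att_cost t s (sigma k) <= att_cost t s (sigma j)]].
Definition att_pref (t s : R) (sigma : profile) : {set 'I_N} :=
  let M := att_min t s sigma in
  let M' := [set k in M | ~~ (sigma k).2] in
  if M' != set0 then M' else M.
Definition att_share (t s : R) (sigma : profile) (k : 'I_N) : R :=
  if k \in att_pref t s sigma then (#|att_pref t s sigma|%:R)^-1 else 0.

(* quantity sold by firm k: lam = mass of attentive consumers; qA x, qI x are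
   the (nonnegative) per-consumer purchase quantities of an attentive /
   inattentive consumer buying from a firm with strategy x. *)
Definition quantity (t s lam : R) (qA qI : strat -> R)
  (sigma : profile) (k : 'I_N) : R :=
  lam * att_share t s sigma k * qA (sigma k)
  + (1 - lam) * inatt_share sigma k * qI (sigma k).

Definition profit (m t s lam : R) (qA qI : strat -> R)
  (sigma : profile) (k : 'I_N) : R :=
  (eff_price t (sigma k) - t - m) * quantity t s lam qA qI sigma k.

Definition deviate (sigma : profile) (k : 'I_N) (x : strat) : profile :=
  fun j => if j == k then x else sigma j.

Definition is_equilibrium (m t s lam : R) (qA qI : strat -> R)
  (sigma : profile) : Prop :=
  forall (k : 'I_N) (x : strat),
    profit m t s lam qA qI (deviate sigma k x) k <= profit m t s lam qA qI sigma k.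

End Market.

(* Bertrand competition within each segment.  Put at least two shrouding
   firms at posted price m and at least two non-shrouding firms at posted
   price m + t: every firm then earns producer price m, i.e. zero profit.
   A deviation can only pay with a producer price above m; it then posts a
   price above m and costs an attentive consumer more than m + t, so a
   shrouding rival takes all inattentive consumers and a non-shrouding rival
   all attentive ones, and the deviator sells nothing. *)
From HB Require Import structures.
From mathcomp Require Import all_boot all_order all_algebra lra zify.
Set Implicit Arguments. Unset Strict Implicit. Unset Printing Implicit Defensive.
Import Order.TTheory GRing.Theory Num.Theory.
Local Open Scope ring_scope.

Lemma other_in_set (T : finType) (A : {set T}) (k : T) :
  (1 < #|A|)%N -> exists2 j, j \in A & j != k.
Proof.
move=> A_gt1; have : (0 < #|A :\ k|)%N.
  by move: A_gt1; rewrite (cardsD1 k A); case: (k \in A) => /=; lia.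
by case/card_gt0P => j; rewrite !inE => /andP[jk jA]; exists j.
Qed.

Lemma exists_set_setC_gt1 (T : finType) :
  (3 < #|T|)%N -> exists S : {set T}, (1 < #|S|)%N /\ (1 < #|~: S|)%N.
Proof.
move=> T_gt3; exists [set x in take 2 (enum T)].
have cardS : #|[set x in take 2 (enum T)]| = 2.
  rewrite cardsE (card_uniqP _) ?take_uniq ?enum_uniq // size_takel //.
  by rewrite -cardE ltnW // ltnW.
by move: (cardsC [set x in take 2 (enum T)]); rewrite cardS => cardT; lia.
Qed.

Lemma sum_uniform_share (R : realFieldType) (I : finType) (S : {set I}) :
  S != set0 -> \sum_(k in S) (if k \in S then (#|S|%:R)^-1 else 0 : R) = 1.
Proof.
move=> S_neq0; rewrite (eq_bigr (fun=> (#|S|%:R)^-1)) => [|k ->] //.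
by rewrite sumr_const -(mulr_natr (#|S|%:R)^-1) mulVf // pnatr_eq0 -lt0n card_gt0.
Qed.

Section Shares.
Variables (R : realFieldType) (N : nat).
Implicit Types (sigma : 'I_N -> R * bool) (k j : 'I_N) (t s : R).

Lemma inatt_share_ge0 sigma k : 0 <= inatt_share sigma k.
Proof. by rewrite /inatt_share; case: ifP; rewrite ?invr_ge0 ?ler0n. Qed.

Lemma att_share_ge0 t s sigma k : 0 <= att_share t s sigma k.
Proof. by rewrite /att_share; case: ifP; rewrite ?invr_ge0 ?ler0n. Qed.

Lemma inatt_share_eq0 sigma k j :
  (sigma j).1 < (sigma k).1 -> inatt_share sigma k = 0.
Proof.
move=> jk; rewrite /inatt_share inE; case: forallP => // /(_ j).
by rewrite leNgt jk.
Qed.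

Lemma att_pref_sub t s sigma : att_pref t s sigma \subset att_min t s sigma.
Proof.
rewrite /att_pref; case: ifP => _ //.
by apply/subsetP => k; rewrite inE => /andP[].
Qed.

Lemma att_share_eq0 t s sigma k j :
  att_cost t s (sigma j) < att_cost t s (sigma k) -> att_share t s sigma k = 0.
Proof.
move=> jk; rewrite /att_share; case: ifP => // /(subsetP (att_pref_sub _ _ _)).
by rewrite inE => /forallP /(_ j); rewrite leNgt jk.
Qed.

Lemma deviate_self sigma k x : deviate sigma k x k = x.
Proof. by rewrite /deviate eqxx. Qed.

Lemma deviate_other sigma k x j : j != k -> deviate sigma k x j = sigma j.
Proof. by rewrite /deviate => /negbTE ->. Qed.

End Shares.

Lemma positive_markup (R : realFieldType) (m t s : R) (x : R * bool) :
  0 <= t -> 0 <= s ->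
  0 < eff_price t x - t - m -> m < x.1 /\ m + t < att_cost t s x.
Proof.
by case: x => p [] t0 s0; rewrite /att_cost /eff_price /surcharge /= => ?; split; lra.
Qed.

Section Equilibrium.
Variables (R : realFieldType) (N : nat) (m t s lam : R) (qA qI : R * bool -> R).
Hypotheses (t_ge0 : 0 <= t) (s_ge0 : 0 <= s).
Hypotheses (lam_ge0 : 0 <= lam) (lam_le1 : lam <= 1).
Hypotheses (qA_ge0 : forall x, 0 <= qA x) (qI_ge0 : forall x, 0 <= qI x).
Implicit Types (sigma : 'I_N -> R * bool) (x : R * bool) (S : {set 'I_N}) (k : 'I_N).

Lemma quantity_ge0 sigma k : 0 <= quantity t s lam qA qI sigma k.
Proof.
rewrite /quantity addr_ge0 // !mulr_ge0 ?subr_ge0 //;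
  by [exact: att_share_ge0 | exact: inatt_share_ge0].
Qed.

Lemma undercut_equilibrium sigma :
  (forall k, 0 <= profit m t s lam qA qI sigma k) ->
  (forall k, exists2 j, j != k & (sigma j).1 <= m) ->
  (forall k, exists2 j, j != k & att_cost t s (sigma j) <= m + t) ->
  is_equilibrium m t s lam qA qI sigma.
Proof.
move=> profit_ge0 cheap_posted cheap_cost k x; apply: le_trans (profit_ge0 k).
rewrite /profit deviate_self.
have [markup_le0 | /(positive_markup t_ge0 s_ge0) [posted_gt cost_gt]] :=
  lerP (eff_price t x - t - m) 0.
  exact: mulr_le0_ge0 markup_le0 (quantity_ge0 _ _).
have [i ik i_cheap] := cheap_posted k.
have [j jk j_cheap] := cheap_cost k.
rewrite /quantity (inatt_share_eq0 (j := i)); last first.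
  by rewrite deviate_other // deviate_self (le_lt_trans i_cheap posted_gt).
rewrite (att_share_eq0 (j := j)); last first.
  by rewrite deviate_other // deviate_self (le_lt_trans j_cheap cost_gt).
by rewrite !(mulr0, mul0r) addr0 mulr0.
Qed.

Definition segment_profile (S : {set 'I_N}) (k : 'I_N) : R * bool :=
  if k \in S then (m, true) else (m + t, false).

Lemma segment_profile_shrouds S k : (segment_profile S k).2 = (k \in S).
Proof. by rewrite /segment_profile; case: ifP. Qed.

Lemma segment_profit S k : profit m t s lam qA qI (segment_profile S) k = 0.
Proof.
rewrite /profit /eff_price /surcharge /segment_profile.
by case: ifP => _ /=; rewrite ?addr0 addrK subrr mul0r.
Qed.

Lemma segment_att_cost S k :
  att_cost t s (segment_profile S k) = if k \in S then m + t + s else m + t.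
Proof.
by rewrite /att_cost /eff_price /surcharge /segment_profile; case: ifP; rewrite ?addr0.
Qed.

Lemma inatt_set_segment S :
  0 < t -> S != set0 -> inatt_set (segment_profile S) = S.
Proof.
move=> t_gt0 /set0Pn [i iS]; apply/setP => k; rewrite inE /segment_profile.
apply/forallP/idP => [/(_ i) | kS j]; last by rewrite kS; case: ifP; rewrite // lerDl ltW.
by rewrite iS; case: ifP => //= _; rewrite gerDl leNgt t_gt0.
Qed.

Lemma att_pref_segment S : ~: S != set0 -> att_pref t s (segment_profile S) = ~: S.
Proof.
move=> SC_neq0.
have att_minE : [set k in att_min t s (segment_profile S)
                       | ~~ (segment_profile S k).2] = ~: S.
  apply/setP => k; rewrite !inE segment_profile_shrouds andbC.
  case: (boolP (k \in S)) => //= kNS; apply/forallP => j.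
  by rewrite !segment_att_cost (negbTE kNS); case: ifP; rewrite ?lerDl.
by rewrite /att_pref att_minE SC_neq0.
Qed.

Lemma segment_equilibrium S :
  (1 < #|S|)%N -> (1 < #|~: S|)%N ->
  is_equilibrium m t s lam qA qI (segment_profile S).
Proof.
move=> S_gt1 SC_gt1; apply: undercut_equilibrium => [k | k | k].
- by rewrite segment_profit.
- have [j jS jk] := other_in_set k S_gt1.
  by exists j; rewrite // /segment_profile jS.
- have [j /[!inE] /negbTE jNS jk] := other_in_set k SC_gt1.
  by exists j; rewrite // segment_att_cost jNS.
Qed.

End Equilibrium.

Theorem lemma3 (R : realFieldType) (N : nat) (m t s theta lam : R)
  (qA qI : R * bool -> R) :
  0 < t -> 0 < lam -> lam < 1 -> 0 <= s -> theta < 1 ->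
  (forall x, 0 <= qA x) -> (forall x, 0 <= qI x) ->
  (4 <= N)%N ->
  exists sigma : 'I_N -> R * bool,
    is_equilibrium m t s lam qA qI sigma
    /\ (2 <= #|[set k | (sigma k).2]|)%N
    /\ (2 <= #|[set k | ~~ (sigma k).2]|)%N
    /\ (forall k, (sigma k).2 -> (sigma k).1 = m)
    /\ (forall k, ~~ (sigma k).2 -> (sigma k).1 = m + t)
    /\ \sum_(k | (sigma k).2) inatt_share sigma k = 1
    /\ \sum_(k | ~~ (sigma k).2) att_share t s sigma k = 1.
Proof.
(* theta does not enter the model: inattentive demand depends on posted prices only. *)
move=> t_gt0 lam_gt0 lam_lt1 s_ge0 _ qA_ge0 qI_ge0 N_ge4.
have [S [S_gt1 SC_gt1]] : exists S : {set 'I_N}, (1 < #|S|)%N /\ (1 < #|~: S|)%N.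
  by apply: exists_set_setC_gt1; rewrite card_ord.
have S_neq0 : S != set0 by rewrite -card_gt0 ltnW.
have SC_neq0 : ~: S != set0 by rewrite -card_gt0 ltnW.
pose sigma := segment_profile m t S.
have shroudsE k : (sigma k).2 = (k \in S) := segment_profile_shrouds m t S k.
exists sigma; split.
  exact: (segment_equilibrium m (ltW t_gt0) s_ge0 (ltW lam_gt0) (ltW lam_lt1)
    qA_ge0 qI_ge0 S_gt1 SC_gt1).
have -> : [set k | (sigma k).2] = S by apply/setP => k; rewrite inE shroudsE.
have -> : [set k | ~~ (sigma k).2] = ~: S by apply/setP => k; rewrite !inE shroudsE.
do 2!split => //.
split; first by move=> k; rewrite /sigma /segment_profile; case: ifP.
split; first by move=> k; rewrite /sigma /segment_profile; case: ifP.
split.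
  rewrite (eq_bigl (fun k => k \in S)) => [|k]; last by rewrite shroudsE.
  by rewrite /inatt_share inatt_set_segment // sum_uniform_share.
rewrite (eq_bigl (fun k => k \in ~: S)) => [|k]; last by rewrite shroudsE inE.
by rewrite /att_share att_pref_segment // sum_uniform_share.
Qed.
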